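(* For $p\in[0,1]$ let $G_p$ be the $\{0,1\}$-Bernoulli distribution with $G_p(\{0\})=p$, $G_p(\{1\})=1-p$, and let $\Lambda^p$ and $\Lambda^p_{dir}$ be the time constants of the undirected model and of the directed model with horizontal weight law $G_p$. Then for every $v\ge0$, $\lim_{p\to0}\Lambda^p(v)=\Lambda^0(v)=v+1$, and likewise $\lim_{p\to0}\Lambda^p_{dir}(v)=v+1$.
   Context: Undirected model with law $G$ on $[0,\infty)$: in $\mathbb Z^2$, every vertical edge has weight $1$ and every horizontal edge an independent random weight with law $G$; the passage time of a nearest-neighbour path is the sum of its edge weights; $T(u,w)$ is the infimum over all paths from $u$ to $w$, and $\Lambda(v)=\lim_n\frac1nT((0,0),(n,\lceil vn\rceil))$ (a.s. limit, deterministic). Directed model: same weights, but the infimum $T_{dir}(u,w)$ is taken only over directed paths, i.e. paths whose steps are $(1,0)$ or $(0,1)$, and $\Lambda_{dir}(v)=\lim_n\frac1nT_{dir}((0,0),(n,\lceil vn\rceil))$ (a.s. limit, deterministic). *)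

From HB Require Import structures.
From mathcomp Require Import all_boot all_order all_algebra.
From mathcomp Require Import all_classical all_reals all_analysis.
Set Implicit Arguments. Unset Strict Implicit. Unset Printing Implicit Defensive.
Import Order.TTheory GRing.Theory Num.Theory.
Import numFieldNormedType.Exports.
Local Open Scope classical_set_scope.
Local Open Scope ring_scope.

Definition vtx := (int * int)%type.

(* Horizontal weight configuration: [w x] is the weight of the horizontal
   edge between x = (a,b) and (a+1,b).  Vertical edges have weight 1. *)
Definition config (R : realType) := vtx -> R.

Definition nn (x y : vtx) : bool :=
  ((x.2 == y.2) && ((y.1 == x.1 + 1) || (x.1 == y.1 + 1))) ||
  ((x.1 == y.1) && ((y.2 == x.2 + 1) || (x.2 == y.2 + 1))).

Definition dstep (x y : vtx) : bool :=
  ((x.2 == y.2) && (y.1 == x.1 + 1)) || ((x.1 == y.1) && (y.2 == x.2 + 1)).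

Definition edge_weight (R : realType) (w : config R) (x y : vtx) : R :=
  if x.2 == y.2 then w (Order.min x.1 y.1, x.2) else 1.

Fixpoint path_weight (R : realType) (w : config R) (x : vtx) (s : seq vtx) : R :=
  match s with
  | [::] => 0
  | y :: s' => edge_weight w x y + path_weight w y s'
  end.

Definition T (R : realType) (w : config R) (u z : vtx) : R :=
  inf [set path_weight w u s | s in [set s : seq vtx | path nn u s && (last u s == z)]].

Definition Tdir (R : realType) (w : config R) (u z : vtx) : R :=
  inf [set path_weight w u s | s in [set s : seq vtx | path dstep u s && (last u s == z)]].

Definition target (R : realType) (v : R) (n : nat) : vtx :=
  ((n%:Z)%R, Num.ceil (v * n%:R)).

Definition mutually_independent (R : realType) (d : measure_display)
  (Omega : measurableType d) (P : probability Omega R) (I : eqType)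
  (X : I -> Omega -> R) : Prop :=
  forall (s : seq I) (A : I -> set R), uniq s ->
    (forall i, measurable (A i)) ->
    P (\bigcap_(i in [set` s]) (X i @^-1` A i)) =
    ((\prod_(i <- s) fine (P (X i @^-1` A i)))%R)%:E.

Definition iid_bernoulli_weights (R : realType) (d : measure_display)
  (Omega : measurableType d) (P : probability Omega R) (p : R)
  (X : vtx -> Omega -> R) : Prop :=
  (forall e, measurable_fun setT (X e)) /\
  (forall e, P (X e @^-1` [set 0]) = p%:E) /\
  (forall e, P (X e @^-1` [set 1]) = (1 - p)%:E) /\
  mutually_independent P X.

From HB Require Import structures.
From mathcomp Require Import all_boot all_order all_algebra.
From mathcomp Require Import all_classical all_reals all_analysis.
From mathcomp Require Import zify ring lra.
Import Order.TTheory GRing.Theory Num.Theory.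
Import numFieldNormedType.Exports.

(* Horizontal weights lie in [0, 1], so the staircase path (right, then up) gives
   T_dir(0, (n, ceil(vn))) <= n + ceil(vn), hence Lam^p <= Lam^p_dir <= v + 1.
   Conversely, with {0,1} weights, if T(0, (a, b)) < (1 - 1/q)(a + b), then the first
   K = a + b steps of a loop-erased path below that weight form a self-avoiding path
   using more than K/q distinct horizontal edges of weight 0.  There are at most 4^K such paths
   and 2^K sets of marked steps, each realised with probability p^(K/q) <= 16^-K when
   p <= 16^-q, so this event has probability at most 2^-K.  If Lam^p(v) were below
   (1 - 1/q)(v + 1), the almost sure convergence of T_n/n would make these events hold
   for all large n with probability one, while their lim inf has probability at most
   1/2.  Letting q grow gives both limits, and p = 0 gives Lam^0(v) = v + 1. *)

Set Implicit Arguments.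
Unset Strict Implicit.
Unset Printing Implicit Defensive.

Local Open Scope classical_set_scope.
Local Open Scope ring_scope.

(** * Paths and passage times *)

Definition origin : vtx := (0, 0).

Definition horizontal (x y : vtx) : bool := x.2 == y.2.

Definition edge_key (x y : vtx) : vtx := (Order.min x.1 y.1, x.2).

Definition l1dist (x y : vtx) : nat := (`|y.1 - x.1| + `|y.2 - x.2|)%N.

Section PathWeight.
Variables (R : realType) (w : config R).

Lemma edge_weightE x y :
  edge_weight w x y = if horizontal x y then w (edge_key x y) else 1.
Proof. by []. Qed.

Lemma path_weight_cat x s1 s2 :
  path_weight w x (s1 ++ s2) = path_weight w x s1 + path_weight w (last x s1) s2.
Proof. by elim: s1 x => [|y s IH] x /=; rewrite ?add0r // IH addrA. Qed.

Lemma path_weight_sum x s : path_weight w x s =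
  \sum_(0 <= i < size s) edge_weight w (nth x (x :: s) i) (nth x s i).
Proof.
elim: s x => [|y s IH] x /=; first by rewrite big_geq.
rewrite big_nat_recl // IH; congr (_ + _); apply: eq_big_nat => i /andP[_ lti].
by rewrite /= !(set_nth_default x y) // ltnW.
Qed.

Hypothesis w_ge0 : forall e, 0 <= w e.

Lemma edge_weight_ge0 x y : 0 <= edge_weight w x y.
Proof. by rewrite /edge_weight; case: ifP. Qed.

Lemma path_weight_ge0 x s : 0 <= path_weight w x s.
Proof. by elim: s x => [|y s IH] x //=; rewrite addr_ge0 ?edge_weight_ge0. Qed.

Lemma path_weight_take x s k : path_weight w x (take k s) <= path_weight w x s.
Proof. by rewrite -{2}(cat_take_drop k s) path_weight_cat lerDl path_weight_ge0. Qed.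

Lemma loop_erasure (e : rel vtx) x s : path e x s -> exists s',
  [/\ path e x s', last x s' = last x s, uniq (x :: s'),
      {subset s' <= s} & path_weight w x s' <= path_weight w x s].
Proof.
elim: {s}(size s) {-2}s x (leqnn (size s)) => [|n IH] s x.
  by rewrite leqn0 => /nilP -> _; exists [::].
have [xs|xs] := boolP (x \in s).
  case/splitPr: xs => s1 s2; rewrite size_cat cat_path /= => Hs /and3P[_ _ Hp2].
  have [|s' [P1 L1 U1 S1 W1]] := IH s2 x _ Hp2; first by move: Hs; lia.
  exists s'; split => //; first by rewrite L1 last_cat.
    by move=> z /S1 zs; rewrite mem_cat inE zs !orbT.
  rewrite path_weight_cat /= (le_trans W1) // addrA lerDr.
  by rewrite addr_ge0 ?path_weight_ge0 ?edge_weight_ge0.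
case: s xs => [_ _ _|y s xs /= Hs /andP[exy Hp]]; first by exists [::].
have [s' [P1 L1 U1 S1 W1]] := IH s y Hs Hp.
exists (y :: s'); split => //=; rewrite ?exy ?lerD2l //.
- move: U1 xs; rewrite /= !inE negb_or => /andP[ys' us'] /andP[xy xs].
  by rewrite ys' us' negb_or xy /= andbT; apply: contra xs => /S1.
- by move=> z; rewrite !inE => /orP[->//|/S1 ->]; rewrite orbT.
Qed.

End PathWeight.

Lemma l1dist_le_size x s : path nn x s -> (l1dist x (last x s) <= size s)%N.
Proof.
rewrite /l1dist; elim: s x => [|y s IH] x /=; first by rewrite !subrr.
case/andP => + /IH; case: x y => [a b] [c e]; rewrite /nn /=.
by case/orP => /andP[/eqP h /orP[] /eqP h']; rewrite ?h ?h'; lia.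
Qed.

Fixpoint right_run (x : vtx) (n : nat) : seq vtx :=
  if n is n'.+1 then (x.1 + 1, x.2) :: right_run (x.1 + 1, x.2) n' else [::].

Fixpoint up_run (x : vtx) (n : nat) : seq vtx :=
  if n is n'.+1 then (x.1, x.2 + 1) :: up_run (x.1, x.2 + 1) n' else [::].

Definition staircase (a b : nat) : seq vtx := right_run origin a ++ up_run (a%:Z, 0) b.

Lemma right_run_path x n : path dstep x (right_run x n).
Proof. by elim: n x => [|n IH] x //=; rewrite IH /dstep /= !eqxx. Qed.

Lemma up_run_path x n : path dstep x (up_run x n).
Proof. by elim: n x => [|n IH] x //=; rewrite IH /dstep /= !eqxx orbT. Qed.

Lemma last_right_run x n : last x (right_run x n) = (x.1 + n%:Z, x.2).
Proof.
elim: n x => [|n IH] x /=; first by rewrite addr0; case: x.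
by rewrite IH /= -addrA -add1n PoszD.
Qed.

Lemma last_up_run x n : last x (up_run x n) = (x.1, x.2 + n%:Z).
Proof.
elim: n x => [|n IH] x /=; first by rewrite addr0; case: x.
by rewrite IH /= -addrA -add1n PoszD.
Qed.

Lemma staircase_path a b : path dstep origin (staircase a b).
Proof. by rewrite cat_path right_run_path last_right_run /= add0r up_run_path. Qed.

Lemma last_staircase a b : last origin (staircase a b) = (a%:Z, b%:Z).
Proof. by rewrite last_cat last_right_run /= add0r last_up_run /= add0r. Qed.

Lemma dstep_nn x y : dstep x y -> nn x y.
Proof. by rewrite /dstep /nn => /orP[/andP[-> ->]|/andP[-> ->]]; rewrite ?orbT. Qed.

Section Staircase.
Variables (R : realType) (w : config R).
Hypothesis w_le1 : forall e, w e <= 1.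

Lemma right_run_weight x n : path_weight w x (right_run x n) <= n%:R.
Proof.
elim: n x => [|n IH] x //=.
by rewrite /edge_weight /= eqxx -add1n natrD lerD.
Qed.

Lemma up_run_weight x n : path_weight w x (up_run x n) = n%:R.
Proof.
elim: n x => [|n IH] x //=.
rewrite /edge_weight /= IH -add1n natrD ifF //.
by apply/negbTE; rewrite eq_sym -subr_eq0 addrAC subrr add0r.
Qed.

Lemma staircase_weight a b : path_weight w origin (staircase a b) <= (a + b)%:R.
Proof. by rewrite path_weight_cat last_right_run up_run_weight natrD lerD2r right_run_weight. Qed.

End Staircase.

Section PassageTimes.
Variables (R : realType) (w : config R).
Hypothesis w_ge0 : forall e, 0 <= w e.

Lemma Tdir_le_l1 a b : (forall e, w e <= 1) -> Tdir w origin (a%:Z, b%:Z) <= (a + b)%:R.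
Proof.
move=> w_le1; rewrite /Tdir; apply: le_trans (staircase_weight w_le1 a b); apply: ge_inf.
  by exists 0 => _ [s _ <-]; exact: path_weight_ge0.
by exists (staircase a b); rewrite //= staircase_path last_staircase eqxx.
Qed.

Lemma T_le_Tdir u z : (exists s, path dstep u s && (last u s == z)) -> T w u z <= Tdir w u z.
Proof.
move=> [s0 Hs0]; apply: lb_le_inf; first by exists (path_weight w u s0), s0.
move=> _ [s /andP[Hp Hl] <-]; apply: ge_inf.
  by exists 0 => _ [s' _ <-]; exact: path_weight_ge0.
by exists s; rewrite //= Hl andbT; apply: sub_path Hp => x y /dstep_nn.
Qed.

Lemma self_avoiding_path_of_T_lt u z K r : (exists s, path nn u s && (last u s == z)) ->
  (K <= l1dist u z)%N -> T w u z < r ->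
  exists t, [/\ path nn u t, uniq (u :: t), size t = K & path_weight w u t < r].
Proof.
move=> [s0 Hs0] Kz /(inf_lt (ex_intro _ _ (ex_intro2 _ _ s0 Hs0 erefl))).
move=> [_ [s /andP[Hp /eqP Hl] <-] Ws].
have [s' [P1 L1 U1 _ W1]] := loop_erasure w_ge0 Hp.
have Ks : (K <= size s')%N by rewrite (leq_trans Kz) // -Hl -L1 l1dist_le_size.
exists (take K s'); split.
- by move: P1; rewrite -{1}(cat_take_drop K s') cat_path => /andP[].
- exact: (take_uniq K.+1 U1).
- by rewrite size_take_min; apply/minn_idPl.
- exact: le_lt_trans (path_weight_take w_ge0 _ _ _) (le_lt_trans W1 Ws).
Qed.

End PassageTimes.

(** * Self-avoiding paths with many zero-weight edges *)

(* Nearest-neighbour paths of length K are encoded by K-tuples of directions, a finite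
   type of size 4^K. *)
Definition dir_step (d : 'I_4) (x : vtx) : vtx :=
  match val d with
  | 0 => (x.1 + 1, x.2)
  | 1 => (x.1 - 1, x.2)
  | 2 => (x.1, x.2 + 1)
  | _ => (x.1, x.2 - 1)
  end.

Definition walk (x : vtx) (ds : seq 'I_4) : seq vtx := scanl (fun y d => dir_step d y) x ds.

Lemma nn_dir_step x y : nn x y -> exists d, y = dir_step d x.
Proof.
case: x y => [a b] [c e]; rewrite /nn /=.
case/orP => /andP [/eqP-> /orP [] /eqP->].
- by exists (@Ordinal 4 0 isT).
- by exists (@Ordinal 4 1 isT); rewrite /dir_step /= addrK.
- by exists (@Ordinal 4 2 isT).
- by exists (@Ordinal 4 3 isT); rewrite /dir_step /= addrK.
Qed.

Lemma nn_path_walk x t : path nn x t -> exists ds, walk x ds = t.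
Proof.
elim: t x => [|y t IH] x /=; first by exists [::].
by case/andP => /nn_dir_step [d ->] /IH [ds <-]; exists (d :: ds).
Qed.

Lemma horizontal_nn_edge_key a b : nn a b -> horizontal a b ->
  let k := edge_key a b in
  (a = k /\ b = (k.1 + 1, k.2)) \/ (a = (k.1 + 1, k.2) /\ b = k).
Proof.
case: a b => [a1 a2] [b1 b2]; rewrite /nn /horizontal /edge_key /= => + /eqP h2.
rewrite -{}h2 eqxx /=.
case/orP => [/orP[]/eqP-> | /andP[_ /orP[]/eqP]]; try lia.
- by left; rewrite min_l // lerDl.
- by right; rewrite min_r // lerDl.
Qed.

Lemma uniq_path_edge_key_inj x t i j : uniq (x :: t) -> path nn x t ->
  (i < size t)%N -> (j < size t)%N ->
  horizontal (nth x (x :: t) i) (nth x t i) -> horizontal (nth x (x :: t) j) (nth x t j) ->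
  edge_key (nth x (x :: t) i) (nth x t i) = edge_key (nth x (x :: t) j) (nth x t j) ->
  i = j.
Proof.
move=> U /(pathP x) Hp ti tj /(horizontal_nn_edge_key (Hp i ti)) Ei.
move=> /(horizontal_nn_edge_key (Hp j tj)) Ej Eij; rewrite {}Eij /= in Ei.
have nthU k l : (k <= size t)%N -> (l <= size t)%N ->
    nth x (x :: t) k = nth x (x :: t) l -> k = l.
  by move=> kt lt /eqP; rewrite nth_uniq // => /eqP.
have [ti' tj'] := (ltnW ti, ltnW tj).
case: Ei Ej => -[ai bi] [] [aj bj]; rewrite -?aj -?bj in ai bi; try exact: nthU.
all: by have := nthU i j.+1 ti' tj ai; have := nthU i.+1 j ti tj' bi; lia.
Qed.

Definition wsrc (ds : seq 'I_4) (i : nat) : vtx := nth origin (origin :: walk origin ds) i.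
Definition wdst (ds : seq 'I_4) (i : nat) : vtx := nth origin (walk origin ds) i.
Definition horizontal_step (ds : seq 'I_4) (i : nat) : bool := horizontal (wsrc ds i) (wdst ds i).
Definition step_key (ds : seq 'I_4) (i : nat) : vtx := edge_key (wsrc ds i) (wdst ds i).

Lemma size_walk x ds : size (walk x ds) = size ds.
Proof. exact: size_scanl. Qed.

Definition certificate (q K : nat) (ds : K.-tuple 'I_4) (S : {set 'I_K}) : bool :=
  [&& uniq (origin :: walk origin ds), path nn origin (walk origin ds),
      (K < q * #|S|)%N & [forall i in S, horizontal_step ds i]].

Definition step_keys K (ds : K.-tuple 'I_4) (S : {set 'I_K}) : seq vtx :=
  [seq step_key ds i | i : 'I_K <- enum S].

Lemma certificate_step_keys_uniq q K (ds : K.-tuple 'I_4) S :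
  certificate q ds S -> uniq (step_keys ds S).
Proof.
case/and4P => U Pa _ /forall_inP HS; rewrite map_inj_in_uniq ?enum_uniq // => i j.
rewrite !mem_enum => iS jS /(uniq_path_edge_key_inj U Pa) eq_ij; apply/val_inj/eq_ij.
all: first [by rewrite size_walk size_tuple ltn_ord | exact: HS].
Qed.

Section ZeroOneWeights.
Variables (R : realType) (w : config R).
Hypothesis w01 : forall e, w e = 0 \/ w e = 1.

Definition zero_steps K (ds : K.-tuple 'I_4) : {set 'I_K} :=
  [set i : 'I_K | horizontal_step ds i && (w (step_key ds i) == 0)].

Lemma walk_weight K (ds : K.-tuple 'I_4) :
  path_weight w origin (walk origin ds) = K%:R - #|zero_steps ds|%:R.
Proof.
have edgeE (i : 'I_K) : edge_weight w (wsrc ds i) (wdst ds i) = 1 - (i \in zero_steps ds)%:R.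
  rewrite inE /horizontal_step /step_key edge_weightE; case: ifP => _ /=; last by rewrite subr0.
  by case: (w01 (edge_key (wsrc ds i) (wdst ds i))) => ->; rewrite ?eqxx ?oner_eq0 ?subrr ?subr0.
rewrite path_weight_sum size_walk size_tuple big_mkord.
rewrite (eq_bigr _ (fun i _ => edgeE i)) sumrB sumr_const card_ord.
congr (_ - _); rewrite -sum1_card natr_sum [RHS]big_mkcond; apply: eq_bigr => i _.
by case: (i \in _).
Qed.

Lemma certificate_of_T_lt q a b : (0 < q)%N ->
  T w origin (a%:Z, b%:Z) < (1 - q%:R^-1) * (a + b)%:R ->
  exists ds : (a + b).-tuple 'I_4, certificate q ds (zero_steps ds).
Proof.
move=> q_gt0 HT; have w_ge0 e : 0 <= w e by case: (w01 e) => ->.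
have staircase_to : exists s, path nn origin s && (last origin s == (a%:Z, b%:Z)).
  exists (staircase a b); rewrite last_staircase eqxx andbT.
  by apply: sub_path (staircase_path a b) => x y /dstep_nn.
have l1_ab : (a + b <= l1dist origin (a%:Z, b%:Z))%N by rewrite /l1dist /=; lia.
have [t [Pt Ut St Wt]] := self_avoiding_path_of_T_lt w_ge0 staircase_to l1_ab HT.
have [ds Eds] := nn_path_walk Pt.
have sz_ds : size ds == (a + b)%N by rewrite -St -Eds size_walk.
exists (Tuple sz_ds); rewrite /certificate Eds Ut Pt /=; apply/andP; split; last first.
  by apply/forall_inP => i; rewrite inE => /andP[].
have q_pos : 0 < q%:R :> R by rewrite ltr0n.
have : (a + b)%:R / q%:R < #|zero_steps (Tuple sz_ds)|%:R :> R.
  by move: Wt; rewrite -Eds (walk_weight (Tuple sz_ds)); lra.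
by rewrite ltr_pdivrMr // -natrM ltr_nat mulnC.
Qed.

End ZeroOneWeights.

(** * Deterministic and analytic bounds *)

Definition ceil_nat (R : realType) (x : R) : nat := `|Num.ceil x|%N.

Lemma ceil_nat_int (R : realType) (x : R) : 0 <= x -> (ceil_nat x)%:Z = Num.ceil x.
Proof. by move=> x_ge0; rewrite gez0_abs // ceil_ge0 (lt_le_trans _ x_ge0). Qed.

Lemma ceil_nat_itv (R : realType) (x : R) : 0 <= x -> x <= (ceil_nat x)%:R < x + 1.
Proof.
move=> x_ge0; rewrite pmulrn ceil_nat_int // ceil_ge /=.
by have := ceilB1_lt x; rewrite intrB; lra.
Qed.

Lemma target_ceil_nat (R : realType) (v : R) n :
  0 <= v -> target v n = (n%:Z, (ceil_nat (v * n%:R))%:Z).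
Proof. by move=> v_ge0; rewrite /target ceil_nat_int // mulr_ge0. Qed.

Lemma invn_cvg0 (R : realType) : (n%:R^-1 : R) @[n --> \oo] --> 0.
Proof.
apply/(@gtr0_cvgV0 _ _ _ _ (fun n : nat => n%:R)); last exact: cvgr_idn.
by exists 1%N => // n /= n_gt0; rewrite ltr0n.
Qed.

Section DeterministicBounds.
Variables (R : realType) (w : config R) (v L Ld : R).
Hypotheses (w_ge0 : forall e, 0 <= w e) (w_le1 : forall e, w e <= 1) (v_ge0 : 0 <= v).

Lemma time_constants_le_of_cvg :
  (fun n : nat => T w (0, 0) (target v n) / n%:R) @ \oo --> L ->
  (fun n : nat => Tdir w (0, 0) (target v n) / n%:R) @ \oo --> Ld ->
  L <= Ld /\ Ld <= v + 1.
Proof.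
move=> cvgT cvgTd; split.
  apply: (ler_cvg_to cvgT cvgTd); apply: nearW => n.
  rewrite ler_wpM2r ?invr_ge0 // target_ceil_nat //; apply: T_le_Tdir => //.
  by exists (staircase n (ceil_nat (v * n%:R))); rewrite staircase_path last_staircase eqxx.
have cvg_bound : (v + 1 + n%:R^-1 : R) @[n --> \oo] --> v + 1.
  by rewrite -[X in _ --> X]addr0; apply: cvgD; [exact: cvg_cst | exact: invn_cvg0].
apply: (ler_cvg_to cvgTd cvg_bound); near=> n.
have n_pos : 0 < n%:R :> R by rewrite ltr0n; near: n; exact: nbhs_infty_gt.
rewrite ler_pdivrMr // target_ceil_nat // (le_trans (Tdir_le_l1 w_ge0 _ _ w_le1)) //.
have [_] := andP (ceil_nat_itv (mulr_ge0 v_ge0 (ltW n_pos))).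
by rewrite natrD mulrDl mulVf ?gt_eqF //; lra.
Unshelve. all: by end_near.
Qed.

End DeterministicBounds.

Lemma exists_div_nat_le (R : realType) (a eps : R) :
  0 <= a -> 0 < eps -> exists2 q : nat, (0 < q)%N & a / q%:R <= eps.
Proof.
move=> a_ge0 eps_gt0; exists (Num.bound (a / eps)).+1 => //.
have q_pos : 0 < (Num.bound (a / eps)).+1%:R :> R by rewrite ltr0n.
have : a / eps < (Num.bound (a / eps)).+1%:R.
  by rewrite (lt_le_trans (archi_boundP _)) ?ler_nat // divr_ge0 // ltW.
by rewrite ler_pdivrMr // ltr_pdivrMr // mulrC => /ltW.
Qed.

Lemma le_of_forall_inv_nat (R : realType) (a b : R) : 0 <= a ->
  (forall q : nat, (0 < q)%N -> (1 - q%:R^-1) * a <= b) -> a <= b.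
Proof.
move=> a_ge0 lower; apply/ler_addgt0Pr => eps eps_gt0.
have [q q_gt0 a_q] := exists_div_nat_le a_ge0 eps_gt0.
by have := lower q q_gt0; lra.
Qed.

Lemma cvg_at_right0_of_bounds (R : realType) (f : R -> R) (a : R) (delta : nat -> R) :
  0 <= a -> (forall q, 0 < delta q) ->
  (forall (q : nat) p, (0 < q)%N -> 0 < p -> p <= delta q ->
     (1 - q%:R^-1) * a <= f p <= a) ->
  f p @[p --> 0^'+] --> a.
Proof.
move=> a_ge0 delta_gt0 f_bounds; apply/cvgrPdist_le => eps eps_gt0.
have [q q_gt0 a_q] := exists_div_nat_le a_ge0 eps_gt0.
near=> p.
have p_pos : 0 < p by near: p; exact: nbhs_right_gt.
have p_le : p <= delta q by near: p; exact: nbhs_right_le.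
have /andP[lo hi] := f_bounds q p q_gt0 p_pos p_le.
by rewrite ger0_norm ?subr_ge0 //; lra.
Unshelve. all: by end_near.
Qed.

(** * Probabilistic estimates *)

Section MeasureBounds.
Context d (T : measurableType d) (R : realType).

Lemma le_measure_bigsetU_cst (mu : {measure set T -> \bar R}) (I : Type) (r : seq I)
    (F : I -> set T) (c : R) :
  (forall i, measurable (F i)) -> (forall i, (mu (F i) <= c%:E)%E) ->
  (mu (\big[setU/set0]_(i <- r) F i) <= (c *+ size r)%:E)%E.
Proof.
move=> mF muF; elim: r => [|i r IH]; first by rewrite big_nil measure0.
rewrite big_cons (le_trans (measureU2 _ (mF i) (bigsetU_measurable _ (fun j _ => mF j)))) //.
by rewrite mulrS EFinD leeD ?muF.
Qed.

Lemma nondecreasing_bigcup_le (mu : {measure set T -> \bar R}) (F : nat -> set T) (c : \bar R) :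
  (forall k, measurable (F k)) -> {homo F : n m / (n <= m)%N >-> n `<=` m} ->
  (forall k, (mu (F k) <= c)%E) -> (mu (\bigcup_k F k) <= c)%E.
Proof.
move=> mF F_nd muF.
have F_homo : {homo F : n m / (n <= m)%N >-> (n <= m)%O}.
  by move=> n m /F_nd; rewrite subsetEset.
have cvgF := @nondecreasing_cvg_mu _ _ _ mu _ mF (bigcupT_measurable _ mF) F_homo.
by rewrite -(cvg_lim _ cvgF) //; apply: lime_le; [exact: cvgP cvgF | exact: nearW].
Qed.

Lemma ae_probability1 (P : probability T R) (A : set T) :
  measurable A -> {ae P, forall x, A x} -> P A = 1%E.
Proof.
move=> mA /(negligibleP _ (measurableC mA)) PAC0.
rewrite -(probability_setT P) -(setUv A) measureU ?PAC0 ?adde0 ?setICr //.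
exact: measurableC.
Qed.

End MeasureBounds.

Section BernoulliWeights.
Variables (R : realType) (d : measure_display) (Omega : measurableType d).
Variables (P : probability Omega R) (p : R) (X : vtx -> Omega -> R).
Hypothesis HX : iid_bernoulli_weights P p X.

Lemma measurable_weight_preimage e (A : set R) : measurable A -> measurable (X e @^-1` A).
Proof. by case: HX => mX _ mA; rewrite -[X e @^-1` A]setTI; exact: mX. Qed.

Lemma ae_weights01 : {ae P, forall om e, X e om = 0 \/ X e om = 1}.
Proof.
have ae_e e : {ae P, forall om, X e om = 0 \/ X e om = 1}.
  have [_ [PX0 [PX1 _]]] := HX.
  have m01 : measurable (X e @^-1` [set 0] `|` X e @^-1` [set 1]).
    by apply: measurableU; apply: measurable_weight_preimage.
  apply/negligibleP; first exact: measurableC.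
  change (P (~` (X e @^-1` [set 0] `|` X e @^-1` [set 1])) = 0%E).
  rewrite (probability_setC P m01) measureU; try exact: measurable_weight_preimage.
    transitivity (1 - (p%:E + (1 - p)%:E))%E; last by rewrite -EFinD addrC subrK subrr.
    by congr (_ - (_ + _))%E; [exact: PX0 | exact: PX1].
  by rewrite -subset0 => om [/= -> /esym/eqP]; rewrite oner_eq0.
have ae_n : {ae P, forall om n,
    if unpickle n is Some e then X e om = 0 \/ X e om = 1 else True}.
  by apply: ae_foralln => n; case: (unpickle n) => [e|]; [exact: ae_e | exact: aeW].
by apply: filterS ae_n => om all_n e; have := all_n (pickle e); rewrite pickleK.
Qed.

Variable q : nat.

Definition certificate_event K (ds : K.-tuple 'I_4) (S : {set 'I_K}) : set Omega :=
  if certificate q ds S then \bigcap_(e in [set` step_keys ds S]) (X e @^-1` [set 0])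
  else set0.

Definition cheap_event K : set Omega :=
  \big[setU/set0]_(c <- enum {: K.-tuple 'I_4 * {set 'I_K}}) certificate_event c.1 c.2.

Lemma measurable_certificate_event K ds S : measurable (@certificate_event K ds S).
Proof.
rewrite /certificate_event; case: ifP => // _.
apply: fin_bigcap_measurable; first exact: finite_seq.
by move=> e _; exact: measurable_weight_preimage.
Qed.

Lemma measurable_cheap_event K : measurable (cheap_event K).
Proof. by apply: bigsetU_measurable => c _; exact: measurable_certificate_event. Qed.

Lemma cheap_event_of_T_lt om a b : (0 < q)%N -> (forall e, X e om = 0 \/ X e om = 1) ->
  T (X^~ om) origin (a%:Z, b%:Z) < (1 - q%:R^-1) * (a + b)%:R -> cheap_event (a + b) om.
Proof.
move=> q_gt0 w01 /(certificate_of_T_lt w01 q_gt0) [ds cert].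
rewrite /cheap_event -bigcup_seq; exists (ds, zero_steps (X^~ om) ds).
  by rewrite /= mem_enum.
rewrite /certificate_event /= cert => _ /mapP [i + ->].
by rewrite mem_enum inE => /andP[_ /eqP].
Qed.

Hypotheses (p_ge0 : 0 <= p) (p_small : p <= (16^-1) ^+ q).

Lemma certificate_event_le K ds S : (P (@certificate_event K ds S) <= ((16^-1) ^+ K)%:E)%E.
Proof.
have inv16_ge0 : 0 <= 16^-1 :> R by rewrite invr_ge0.
rewrite /certificate_event; case: ifP => cert; last by rewrite measure0 lee_fin exprn_ge0.
have [_ [PX0 [_ indepX]]] := HX.
rewrite (indepX _ (fun=> [set 0]) (certificate_step_keys_uniq cert)) // lee_fin.
rewrite (eq_bigr (fun=> p)) => [|e _]; last by rewrite PX0.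
rewrite /step_keys big_map big_enum /= prodr_const.
rewrite (le_trans (lerXn2r _ _ _ p_small)) ?nnegrE ?exprn_ge0 // -exprM.
rewrite ler_wiXn2l // ?invf_le1 ?ler1n //.
by case/and4P: cert => _ _ /ltnW.
Qed.

Lemma cheap_event_le K : (P (cheap_event K) <= ((2^-1) ^+ K)%:E)%E.
Proof.
apply: le_trans (le_measure_bigsetU_cst _ _ _) _.
- by move=> c; exact: measurable_certificate_event.
- by move=> c; exact: certificate_event_le.
rewrite lee_fin -cardE card_prod card_tuple card_ord -cardsT -powersetT card_powerset.
rewrite cardsT card_ord -[_ *+ _]mulr_natr natrM !natrX -!exprMn.
by have -> : 16^-1 * (4 * 2) = 2^-1 :> R by field.
Qed.

End BernoulliWeights.

Section TimeConstants.
Variables (R : realType) (d : measure_display) (Omega : measurableType d).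
Variables (P : probability Omega R) (p : R) (X : vtx -> Omega -> R) (v : R).
Hypotheses (HX : iid_bernoulli_weights P p X) (v_ge0 : 0 <= v).

Lemma time_constants_le (L Ld : R) :
  {ae P, forall om, (fun n : nat => T (fun e => X e om) (0, 0) (target v n) / n%:R)
                      @ \oo --> L} ->
  {ae P, forall om, (fun n : nat => Tdir (fun e => X e om) (0, 0) (target v n) / n%:R)
                      @ \oo --> Ld} ->
  L <= Ld /\ Ld <= v + 1.
Proof.
move=> cvgT cvgTd.
have P_proper : ProperFilter (almost_everywhere P).
  by apply: ae_properfilter_algebraOfSetsType; change (0 < P setT)%E; rewrite probability_setT.
apply: (filter_const (F := almost_everywhere P)).
apply: filterS3 (ae_weights01 HX) cvgT cvgTd => om w01.
by apply: time_constants_le_of_cvg => // e; case: (w01 e) => ->.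
Qed.

Lemma time_constant_ge q (L : R) : (0 < q)%N -> 0 <= p -> p <= (16^-1) ^+ q ->
  {ae P, forall om, (fun n : nat => T (fun e => X e om) (0, 0) (target v n) / n%:R)
                      @ \oo --> L} ->
  (1 - q%:R^-1) * (v + 1) <= L.
Proof.
move=> q_gt0 p_ge0 p_small cvgT; rewrite leNgt; apply/negP => L_lt.
pose K n := (n + ceil_nat (v * n%:R))%N.
pose C k := \bigcap_(n in [set n | (k < n)%N]) cheap_event X q (K n).
have mC k : measurable (C k).
  apply: bigcap_measurable => [|n _]; first by exists k.+1 => /=.
  exact: measurable_cheap_event HX _ _.
have PC : (P (\bigcup_k C k) <= (2^-1)%:E)%E.
  apply: nondecreasing_bigcup_le => // [m n mn om Com j /= nj | k].
    by apply: Com; exact: leq_ltn_trans nj.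
  have C_sub : (P (C k) <= P (cheap_event X q (K k.+1)))%E.
    apply: le_measure; rewrite ?inE //; first exact: measurable_cheap_event HX _ _.
    by move=> om; apply => /=.
  apply: (le_trans C_sub); apply: (le_trans (cheap_event_le HX p_ge0 p_small _)).
  rewrite lee_fin -[leRHS]expr1 ler_wiXn2l // ?invr_ge0 ?invf_le1 ?ler1n //.
have aeC : {ae P, forall om, (\bigcup_k C k) om}.
  apply: filterS2 (ae_weights01 HX) cvgT => om w01 cvg_om.
  have [k _ Tn_lt] := cvgr_lt _ cvg_om _ L_lt.
  exists k => // n /= kn.
  have n_pos : 0 < n%:R :> R by rewrite ltr0n (leq_ltn_trans _ kn).
  have := Tn_lt n (ltnW kn); rewrite /= ltr_pdivrMr // target_ceil_nat // => T_lt.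
  apply: cheap_event_of_T_lt => //; apply: lt_le_trans T_lt _.
  have [vn_le _] := andP (ceil_nat_itv (mulr_ge0 v_ge0 (ltW n_pos))).
  rewrite -mulrA ler_wpM2l ?subr_ge0 ?invf_le1 ?ler1n ?ltr0n ?natrD //; lra.
have := ae_probability1 (bigcupT_measurable _ mC) aeC.
by move: PC => /[swap] ->; rewrite lee_fin; lra.
Qed.

End TimeConstants.

Theorem lemma3p5 (R : realType) (d : measure_display) (Omega : measurableType d)
  (P : probability Omega R) (X : R -> vtx -> Omega -> R)
  (Lam Lamdir : R -> R -> R) :
  (forall p, 0 <= p <= 1 -> iid_bernoulli_weights P p (X p)) ->
  (forall p v, 0 <= p <= 1 -> 0 <= v ->
     {ae P, forall om, (fun n : nat => T (fun e => X p e om) (0, 0) (target v n) / n%:R)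
                         @ \oo --> Lam p v}) ->
  (forall p v, 0 <= p <= 1 -> 0 <= v ->
     {ae P, forall om, (fun n : nat => Tdir (fun e => X p e om) (0, 0) (target v n) / n%:R)
                         @ \oo --> Lamdir p v}) ->
  forall v : R, 0 <= v ->
    [/\ Lam 0 v = v + 1,
        Lam p v @[p --> 0^'+] --> v + 1 &
        Lamdir p v @[p --> 0^'+] --> v + 1].
Proof.
move=> HX HT HTd v v_ge0.
have delta_gt0 q : 0 < (16^-1 : R) ^+ q by rewrite exprn_gt0 // invr_gt0.
have bounds q p : (0 < q)%N -> 0 <= p -> p <= (16^-1) ^+ q ->
    [/\ (1 - q%:R^-1) * (v + 1) <= Lam p v, Lam p v <= Lamdir p v & Lamdir p v <= v + 1].
  move=> q_gt0 p_ge0 p_small; have hp : 0 <= p <= 1.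
    by rewrite p_ge0 (le_trans p_small) // exprn_ile1 ?invr_ge0 // invf_le1 ?ler1n ?ltr0n.
  have [HTp HTdp] := (HT p v hp v_ge0, HTd p v hp v_ge0).
  have [Lam_le Lamdir_le] := time_constants_le (HX p hp) v_ge0 HTp HTdp.
  by split => //; exact: (time_constant_ge (HX p hp) v_ge0 q_gt0 p_ge0 p_small HTp).
have v1_ge0 : 0 <= v + 1 by rewrite addr_ge0.
split.
- apply/le_anti/andP; split.
    have [_ Lam_le Lamdir_le] := bounds 1%N 0 isT (lexx 0) (ltW (delta_gt0 1%N)).
    exact: le_trans Lamdir_le.
  apply: le_of_forall_inv_nat v1_ge0 _ => q q_gt0.
  by have [] := bounds q 0 q_gt0 (lexx 0) (ltW (delta_gt0 q)).
- apply: (cvg_at_right0_of_bounds v1_ge0 delta_gt0) => q p q_gt0 p_gt0 p_small.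
  have [lo Lam_le Lamdir_le] := bounds q p q_gt0 (ltW p_gt0) p_small.
  by rewrite lo (le_trans Lam_le).
- apply: (cvg_at_right0_of_bounds v1_ge0 delta_gt0) => q p q_gt0 p_gt0 p_small.
  have [lo Lam_le Lamdir_le] := bounds q p q_gt0 (ltW p_gt0) p_small.
  by rewrite Lamdir_le (le_trans lo).
Qed.
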